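(* Let $E$ be a finite set, $X_1,\ldots,X_n$ fuzzy subsets of $E$, $l_1,\ldots,l_n\in\{0,1\}$, and $\Phi_{l_1,\ldots,l_n}(Y_1,\ldots,Y_n)=Y_1^{(l_1)}\cap\cdots\cap Y_n^{(l_n)}$. Then for every $j\in\{0,\ldots,|E|\}$, $$\mathcal{F}^A(Q^{j,1}_{exactly})\big(X_1^{(l_1)}\tilde\cap\cdots\tilde\cap X_n^{(l_n)}\big)=\sum_{\substack{Y\in\mathcal{P}(E):\\|Y|=j}} m_{X_1^{(l_1)}\tilde\cap\cdots\tilde\cap X_n^{(l_n)}}(Y)=\sum_{\substack{Y_1,\ldots,Y_n\in\mathcal{P}(E):\\|Y_1\cap\cdots\cap Y_n|=j}} m_{X_1^{(l_1)}}(Y_1)\cdots m_{X_n^{(l_n)}}(Y_n)=\mathcal{F}^A(Q^{j,1}_{exactly}\circ\Phi_{l_1,\ldots,l_n})(X_1,\ldots,X_n).$$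
   Context: For a fuzzy set $X$ on $E$ and crisp $Y\subseteq E$, $m_X(Y)=\prod_{e\in Y}\mu_X(e)\prod_{e\in E\setminus Y}(1-\mu_X(e))$. For a semi-fuzzy quantifier $Q:\mathcal{P}(E)^n\to[0,1]$, $\mathcal{F}^A(Q)(X_1,\ldots,X_n)=\sum_{Y_1,\ldots,Y_n\in\mathcal{P}(E)}m_{X_1}(Y_1)\cdots m_{X_n}(Y_n)Q(Y_1,\ldots,Y_n)$. For crisp sets $Y^{(1)}=Y$, $Y^{(0)}=E\setminus Y$; for fuzzy sets $X^{(1)}=X$, $X^{(0)}$ has membership $1-\mu_X$, and $\tilde\cap$ is the pointwise product. $Q^{j,1}_{exactly}(Y)=1$ if $|Y|=j$ and $0$ otherwise; $(Q^{j,1}_{exactly}\circ\Phi_{l_1,\ldots,l_n})(Y_1,\ldots,Y_n)=Q^{j,1}_{exactly}(\Phi_{l_1,\ldots,l_n}(Y_1,\ldots,Y_n))$. *)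

From HB Require Import structures.
From mathcomp Require Import all_boot all_order all_algebra.
Set Implicit Arguments. Unset Strict Implicit. Unset Printing Implicit Defensive.
Import Order.TTheory GRing.Theory Num.Theory.
Local Open Scope ring_scope.

Section FuzzyDefs.
Variables (R : numFieldType) (E : finType).

(* A fuzzy subset of E is its membership function E -> R (values in [0,1]). *)
Definition fuzzy_valid (X : E -> R) : Prop := forall e, 0 <= X e <= 1.

Definition mX (X : E -> R) (Y : {set E}) : R :=
  (\prod_(e in Y) X e) * (\prod_(e in ~: Y) (1 - X e)).

Definition crisp_pow (l : bool) (Y : {set E}) : {set E} := if l then Y else ~: Y.

Definition fuzzy_pow (l : bool) (X : E -> R) : E -> R :=
  fun e => if l then X e else 1 - X e.

Definition fuzzy_meet (n : nat) (l : 'I_n -> bool) (X : 'I_n -> E -> R) : E -> R :=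
  fun e => \prod_(i < n) fuzzy_pow (l i) (X i) e.

Definition FA (n : nat) (Q : {ffun 'I_n -> {set E}} -> R) (X : 'I_n -> E -> R) : R :=
  \sum_(Y : {ffun 'I_n -> {set E}}) (\prod_(i < n) mX (X i) (Y i)) * Q Y.

Definition Q_exactly (j : nat) (Y : {set E}) : R := if #|Y| == j then 1 else 0.

Definition Phi (n : nat) (l : 'I_n -> bool) (Y : 'I_n -> {set E}) : {set E} :=
  \bigcap_(i < n) crisp_pow (l i) (Y i).

Definition unaryQ (Q : {set E} -> R) : {ffun 'I_1 -> {set E}} -> R :=
  fun Y => Q (Y ord0).

End FuzzyDefs.

From HB Require Import structures.
From mathcomp Require Import all_boot all_order all_algebra.
Import Order.TTheory GRing.Theory Num.Theory.
Set Implicit Arguments. Unset Strict Implicit. Unset Printing Implicit Defensive.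
Local Open Scope ring_scope.

(* m_{X_1 ~∩ ... ~∩ X_n} is the image of the product of the m_{X_i} under
   (Y_1, ..., Y_n) |-> Y_1 ∩ ... ∩ Y_n: both sides factor over the points e of
   E, and at a single point the weight of "e lies in every Y_i" is
   prod_i X_i(e), while all membership patterns together have weight 1.
   Complementing an argument turns X_i into X_i^(0) without changing the
   weights, which handles the exponents l_i. None of the side conditions
   (n > 0, memberships in [0,1], j <= |E|) is needed. *)

Section FuzzyIntersection.
Variables (R : numFieldType) (E : finType).

Lemma mXE (W : E -> R) (Y : {set E}) :
  mX W Y = \prod_e (if e \in Y then W e else 1 - W e).
Proof.
rewrite /mX [RHS](bigID (mem Y)) /=; congr (_ * _).
  by apply: eq_bigr => e ->.
apply: eq_big => e; first by rewrite in_setC.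
by rewrite in_setC => /negbTE ->.
Qed.

Lemma mX_fuzzy_pow (l : bool) (W : E -> R) (Y : {set E}) :
  mX (fuzzy_pow l W) (crisp_pow l Y) = mX W Y.
Proof.
rewrite !mXE /fuzzy_pow /crisp_pow; case: l => //.
apply: eq_bigr => e _; rewrite in_setC.
by case: (e \in Y); rewrite //= opprB addrC subrK.
Qed.

Lemma crisp_powK (l : bool) : involutive (@crisp_pow E l).
Proof. by case: l => Y //=; rewrite /crisp_pow setCK. Qed.

Lemma sum_prod_bool_forall (I : finType) (w : I -> R) (b : bool) :
  \sum_(c : {ffun I -> bool} | [forall i, c i] == b)
     \prod_i (if c i then w i else 1 - w i)
  = if b then \prod_i w i else 1 - \prod_i w i.
Proof.
set F := fun c : {ffun I -> bool} => \prod_i (if c i then w i else 1 - w i).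
have sumF1 : \sum_c F c = 1.
  rewrite -(bigA_distr_bigA (fun i (b : bool) => if b then w i else 1 - w i)).
  by apply: big1 => i _; rewrite big_bool /= addrC subrK.
have sumF_all : \sum_(c : {ffun I -> bool} | [forall i, c i]) F c = \prod_i w i.
  rewrite (big_pred1 [ffun=> true]) => [|c /=].
    by apply: eq_bigr => i _; rewrite ffunE.
  apply/forallP/eqP => [c_true|-> i]; last by rewrite ffunE.
  by apply/ffunP => i; rewrite ffunE c_true.
case: b => /=; first by rewrite -sumF_all; apply: eq_bigl => c; rewrite eqb_id.
transitivity (\sum_c F c - \sum_(c : {ffun I -> bool} | [forall i, c i]) F c); first last.
  by rewrite sumF1 sumF_all.
rewrite [in RHS](bigID (fun c : {ffun I -> bool} => [forall i, c i])) /=.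
rewrite addrAC subrr add0r.
by apply: eq_bigl => c; rewrite eqbF_neg.
Qed.

Lemma sum_mX_bigcap_eq (I : finType) (W : I -> E -> R) (S : {set E}) :
  \sum_(Y : {ffun I -> {set E}} | \bigcap_i Y i == S) \prod_i mX (W i) (Y i)
  = mX (fun e => \prod_i W i e) S.
Proof.
rewrite mXE.
under [RHS]eq_bigr => e _ do
  rewrite -(sum_prod_bool_forall (fun i => W i e) (e \in S)).
rewrite bigA_distr_big_dep.
pose transpose (Y : {ffun I -> {set E}}) : {ffun E -> {ffun I -> bool}} :=
  [ffun e => [ffun i => e \in Y i]].
rewrite (reindex transpose); last first.
  exists (fun F : {ffun E -> {ffun I -> bool}} => [ffun i => [set e | F e i]]).
    by move=> Y _; apply/ffunP => i; apply/setP => e; rewrite !ffunE inE !ffunE.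
  by move=> F _; apply/ffunP => e; apply/ffunP => i; rewrite !ffunE inE.
have in_bigcap e (Y : {ffun I -> {set E}}) :
    (e \in \bigcap_i Y i) = [forall i, transpose Y e i].
  rewrite /transpose; apply/bigcapP/forallP => [Ye i|Ye i _].
    by rewrite !ffunE; apply: Ye.
  by have := Ye i; rewrite !ffunE.
apply: eq_big => [Y|Y _].
  apply/eqP/familyP => [<- e|Y_S]; first by rewrite unfold_in /= in_bigcap.
  by apply/setP => e; have := Y_S e; rewrite unfold_in /= in_bigcap => /eqP.
rewrite exchange_big; apply: eq_bigr => i _.
by rewrite mXE; apply: eq_bigr => e _; rewrite !ffunE.
Qed.

Lemma sum_mX_bigcap (I : finType) (W : I -> E -> R) (P : pred {set E}) :
  \sum_(Y : {ffun I -> {set E}} | P (\bigcap_i Y i)) \prod_i mX (W i) (Y i)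
  = \sum_(S | P S) mX (fun e => \prod_i W i e) S.
Proof.
rewrite (partition_big (fun Y : {ffun I -> {set E}} => \bigcap_i Y i) P) //=.
apply: eq_bigr => S PS; rewrite -sum_mX_bigcap_eq.
by apply: eq_bigl => Y; case: eqP => [->|]; rewrite ?PS ?andbF.
Qed.

Lemma FA_unaryQ (Q : {set E} -> R) (Z : E -> R) :
  FA (unaryQ Q) (fun _ : 'I_1 => Z) = \sum_Y mX Z Y * Q Y.
Proof.
rewrite /FA (reindex (fun Y : {set E} => [ffun=> Y] : {ffun 'I_1 -> {set E}})).
  by apply: eq_bigr => Y _; rewrite big_ord1 /unaryQ !ffunE.
exists (fun Y : {ffun 'I_1 -> {set E}} => Y ord0) => Y _; first by rewrite ffunE.
by apply/ffunP => i; rewrite ffunE (ord1 i).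
Qed.

Lemma FA_comp_Phi (n : nat) (l : 'I_n -> bool) (Q : {set E} -> R)
    (X : 'I_n -> E -> R) :
  FA (fun Y => Q (Phi l Y)) X
  = FA (fun Y => Q (\bigcap_(i < n) Y i)) (fun i => fuzzy_pow (l i) (X i)).
Proof.
pose flip (Y : {ffun 'I_n -> {set E}}) := [ffun i => crisp_pow (l i) (Y i)].
have flipK : involutive flip.
  by move=> Y; apply/ffunP => i; rewrite !ffunE crisp_powK.
rewrite /FA [RHS](reindex_inj (can_inj flipK)); apply: eq_bigr => Y _.
congr (_ * _); first by apply: eq_bigr => i _; rewrite ffunE mX_fuzzy_pow.
by congr Q; apply: eq_bigr => i _; rewrite ffunE.
Qed.

Lemma sum_mul_Q_exactly (T : finType) (f : T -> R) (g : T -> {set E}) (j : nat) :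
  \sum_t f t * Q_exactly R j (g t) = \sum_(t | #|g t| == j) f t.
Proof.
rewrite [RHS]big_mkcond; apply: eq_bigr => t _.
by rewrite /Q_exactly; case: ifP; rewrite ?mulr1 ?mulr0.
Qed.

End FuzzyIntersection.

Theorem lemma1 (R : numFieldType) (E : finType) (n : nat) (hn : (0 < n)%N)
  (X : 'I_n -> E -> R) (hX : forall i, fuzzy_valid (X i))
  (l : 'I_n -> bool) (j : nat) (hj : (j <= #|E|)%N) :
  let Z := fuzzy_meet l X in
  [/\ FA (unaryQ (Q_exactly R j)) (fun _ : 'I_1 => Z)
        = \sum_(Y : {set E} | #|Y| == j) mX Z Y,
      \sum_(Y : {set E} | #|Y| == j) mX Z Y
        = \sum_(Y : {ffun 'I_n -> {set E}} | #|\bigcap_(i < n) Y i| == j)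
            \prod_(i < n) mX (fuzzy_pow (l i) (X i)) (Y i)
    & \sum_(Y : {ffun 'I_n -> {set E}} | #|\bigcap_(i < n) Y i| == j)
            \prod_(i < n) mX (fuzzy_pow (l i) (X i)) (Y i)
        = FA (fun Y : {ffun 'I_n -> {set E}} => Q_exactly R j (Phi l Y)) X ].
Proof.
move=> Z; split.
- by rewrite FA_unaryQ sum_mul_Q_exactly.
- by rewrite (sum_mX_bigcap _ (fun S => #|S| == j)).
- by rewrite FA_comp_Phi /FA sum_mul_Q_exactly.
Qed.
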